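(* Let $a, b$ be integers with $0 < a \le b$ and let $L_{a,b} = \{C_{i,1} : 1 \le i \le a+1\} \cup \{C_{1,j} : 1 < j \le b+1\}$, of size $n = a+b+1$. Then on the $n \times n$ board, $\mathrm{cp}_{\mathrm{free}}(L_{a,b}) \ge 2$.
   Context: For integers $i,j$, $C_{i,j}$ denotes the unit square cell in column $i$ and row $j$ of the integer grid (columns numbered left to right, rows numbered top to bottom). A polyomino is a finite set of cells; its size is its number of cells. For a polyomino $\mathcal{P}$ of size $n$ the board is $\mathbb{B} = \{C_{i,j} : 1 \le i,j \le n\}$. The shift of $\mathcal{P}$ by integers $(c,d)$ is $\mathcal{P}+(c,d) = \{C_{x+c,y+d} : C_{x,y} \in \mathcal{P}\}$. The rotations of $L_{a,b}$ by $90^\circ, 180^\circ, 270^\circ$ clockwise are $LR_{a,b} = \{C_{i,1} : 1 \le i \le b+1\} \cup \{C_{b+1,j} : 1 \le j \le a+1\}$, $LR^2_{a,b} = \{C_{i,b+1} : 1 \le i \le a+1\} \cup \{C_{a+1,j} : 1 \le j \le b+1\}$, $LR^3_{a,b} = \{C_{i,a+1} : 1 \le i \le b+1\} \cup \{C_{1,j} : 1 \le j \le a+1\}$ (reflections are not allowed). A free copy of $L_{a,b}$ is any shift of $L_{a,b}$, $LR_{a,b}$, $LR^2_{a,b}$ or $LR^3_{a,b}$. A set of polyominoes is a valid arrangement if each is contained in $\mathbb{B}$ and they are pairwise disjoint. A free packing of $\mathcal{P}$ is a set of free copies of $\mathcal{P}$ forming a valid arrangement such that adding any further free copy of $\mathcal{P}$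 yields an invalid arrangement. The clumsy free packing number $\mathrm{cp}_{\mathrm{free}}(\mathcal{P})$ is the minimum number of polyominoes in a free packing of $\mathcal{P}$ on the $n \times n$ board. *)

From Stdlib Require Import ZArith List.
Open Scope Z_scope.

(* A cell C_{i,j} is the pair (i, j) : Z * Z (column i, row j). *)
Definition cell := (Z * Z)%type.

Definition poly := cell -> Prop.

Definition L (a b : Z) : poly := fun z =>
  let (x, y) := z in (y = 1 /\ 1 <= x <= a + 1) \/ (x = 1 /\ 1 < y <= b + 1).

Definition LR (a b : Z) : poly := fun z =>
  let (x, y) := z in (y = 1 /\ 1 <= x <= b + 1) \/ (x = b + 1 /\ 1 <= y <= a + 1).

Definition LR2 (a b : Z) : poly := fun z =>
  let (x, y) := z in (y = b + 1 /\ 1 <= x <= a + 1) \/ (x = a + 1 /\ 1 <= y <= b + 1).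

Definition LR3 (a b : Z) : poly := fun z =>
  let (x, y) := z in (y = a + 1 /\ 1 <= x <= b + 1) \/ (x = 1 /\ 1 <= y <= a + 1).

Definition shift (P : poly) (c d : Z) : poly := fun z =>
  let (x, y) := z in P (x - c, y - d).

Inductive orient := O0 | O1 | O2 | O3.

Definition rot (a b : Z) (o : orient) : poly :=
  match o with O0 => L a b | O1 => LR a b | O2 => LR2 a b | O3 => LR3 a b end.

Definition copy := (orient * Z * Z)%type.

Definition cells (a b : Z) (q : copy) : poly :=
  let '(o, c, d) := q in shift (rot a b o) c d.

Definition board (n : Z) : poly := fun z =>
  let (x, y) := z in 1 <= x <= n /\ 1 <= y <= n.

Definition in_board (n : Z) (P : poly) : Prop := forall z, P z -> board n z.

Definition disjoint (P Q : poly) : Prop := forall z, ~ (P z /\ Q z).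

(* A free packing: a (finite) family of free copies, listed without
   repetition (guaranteed by pairwise disjointness of nonempty copies),
   each contained in the board, pairwise disjoint, and such that no further
   free copy can be added (every free copy inside the board meets one). *)
Definition free_packing (a b : Z) (s : list copy) : Prop :=
  let n := a + b + 1 in
  (forall q, In q s -> in_board n (cells a b q)) /\
  (forall (i j : nat), (i < j)%nat -> (j < length s)%nat ->
     disjoint (cells a b (nth i s (O0, 0, 0))) (cells a b (nth j s (O0, 0, 0)))) /\
  (forall q : copy, in_board n (cells a b q) ->
     exists p, In p s /\ ~ disjoint (cells a b p) (cells a b q)).

(* A single copy of L_{a,b} never blocks the board, so a free packing needs a
   second copy.  A copy occupies the two sides of its bounding box that meet at
   its elbow, so moving it any distance along the diagonal through the elbow
   yields a disjoint copy.  If neither unit move keeps it on the board, it lies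
   in one of the two board corners off that diagonal, and then the copy rotated
   by 180 degrees and pushed into the board corner of its own elbow misses it. *)
From Pilot Require Import Defs.
From Stdlib Require Import ZArith List Lia.
Open Scope Z_scope.

Ltac unfold_cells := cbv [cells Defs.shift rot L LR LR2 LR3 board in_board disjoint] in *.

Definition width (a b : Z) (o : orient) : Z :=
  match o with O0 | O2 => a | O1 | O3 => b end.

Definition height (a b : Z) (o : orient) : Z :=
  match o with O0 | O2 => b | O1 | O3 => a end.

Lemma in_board_cells (n a b : Z) (o : orient) (c d : Z) :
  0 <= a -> 0 <= b ->
  in_board n (cells a b (o, c, d)) <->
  0 <= c /\ c + width a b o < n /\ 0 <= d /\ d + height a b o < n.
Proof.
  intros Ha Hb; split.
  - intros H.
    (* each orientation contains three of these four corners of its bounding box *)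
    pose proof (H (c + 1, d + 1)); pose proof (H (c + width a b o + 1, d + 1));
    pose proof (H (c + 1, d + height a b o + 1));
    pose proof (H (c + width a b o + 1, d + height a b o + 1)).
    clear H; destruct o; cbn [width height] in *; unfold_cells;
      repeat match goal with h : _ -> _ |- _ =>
        first [specialize (h ltac:(lia)) | clear h] end; lia.
  - intros Hcd [x y]; destruct o; cbn [width height] in *; unfold_cells; lia.
Qed.

Lemma in_board_dec (n a b : Z) (q : copy) :
  0 <= a -> 0 <= b -> {in_board n (cells a b q)} + {~ in_board n (cells a b q)}.
Proof.
  destruct q as [[o c] d]; intros Ha Hb.
  pose proof (in_board_cells n a b o c d Ha Hb) as Hbounds.
  destruct (Z_le_dec 0 c), (Z_lt_dec (c + width a b o) n),
    (Z_le_dec 0 d), (Z_lt_dec (d + height a b o) n);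
    solve [left; apply Hbounds; auto | right; rewrite Hbounds; lia].
Qed.

Definition diag (o : orient) : Z := match o with O0 | O2 => 1 | O1 | O3 => -1 end.

Definition diag_shift (q : copy) (k : Z) : copy :=
  let '(o, c, d) := q in (o, c + k * diag o, d + k).

Lemma disjoint_diag_shift (a b : Z) (q : copy) (k : Z) :
  k <> 0 -> disjoint (cells a b q) (cells a b (diag_shift q k)).
Proof.
  destruct q as [[o c] d]; intros Hk [x y]; destruct o; cbn [diag_shift diag];
    unfold_cells; lia.
Qed.

Definition opp (o : orient) : orient :=
  match o with O0 => O2 | O1 => O3 | O2 => O0 | O3 => O1 end.

Definition corner_copy (a b : Z) (o : orient) : copy :=
  match o with
  | O0 => (O0, 0, 0) | O1 => (O1, a, 0) | O2 => (O2, b, a) | O3 => (O3, 0, b)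
  end.

Lemma corner_copy_in_board (a b : Z) (o : orient) :
  0 <= a -> 0 <= b -> in_board (a + b + 1) (cells a b (corner_copy a b o)).
Proof.
  intros Ha Hb; destruct o; apply in_board_cells; cbn; lia.
Qed.

Lemma disjoint_corner_copy (a b : Z) (o : orient) (c d : Z) :
  0 < a -> 0 < b ->
  in_board (a + b + 1) (cells a b (o, c, d)) ->
  ~ in_board (a + b + 1) (cells a b (diag_shift (o, c, d) 1)) ->
  ~ in_board (a + b + 1) (cells a b (diag_shift (o, c, d) (-1))) ->
  disjoint (cells a b (o, c, d)) (cells a b (corner_copy a b (opp o))).
Proof.
  intros Ha Hb; cbn [diag_shift];
    rewrite !in_board_cells by lia; intros Hin Hup Hdown [x y].
  destruct o; cbn [width height diag opp corner_copy] in *; unfold_cells; lia.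
Qed.

Lemma exists_disjoint_copy (a b : Z) (p : copy) :
  0 < a -> 0 < b -> in_board (a + b + 1) (cells a b p) ->
  exists q, in_board (a + b + 1) (cells a b q) /\ disjoint (cells a b p) (cells a b q).
Proof.
  destruct p as [[o c] d]; intros Ha Hb Hp.
  destruct (in_board_dec (a + b + 1) a b (diag_shift (o, c, d) 1) ltac:(lia) ltac:(lia))
    as [Hup|Hup].
  { exists (diag_shift (o, c, d) 1); split; [exact Hup | apply disjoint_diag_shift; lia]. }
  destruct (in_board_dec (a + b + 1) a b (diag_shift (o, c, d) (-1)) ltac:(lia) ltac:(lia))
    as [Hdown|Hdown].
  { exists (diag_shift (o, c, d) (-1)); split; [exact Hdown | apply disjoint_diag_shift; lia]. }
  exists (corner_copy a b (opp o)); split.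
  - apply corner_copy_in_board; lia.
  - apply disjoint_corner_copy; assumption.
Qed.

Theorem lemma1 (a b : Z) (hab : 0 < a <= b) (s : list copy) :
  free_packing a b s -> (2 <= length s)%nat.
Proof.
  intros [Hin [_ Hmax]].
  destruct s as [|p [|p' s]]; cbn; try lia.
  - destruct (Hmax (corner_copy a b O0)) as [p [[] _]].
    apply corner_copy_in_board; lia.
  - destruct (exists_disjoint_copy a b p ltac:(lia) ltac:(lia) (Hin p (in_eq p nil)))
      as [q [Hq Hpq]].
    destruct (Hmax q Hq) as [p1 [[<- | []] Hmeet]].
    contradiction.
Qed.
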